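(* Let $g_1:\mathcal W\to[\epsilon_1,1]$ (for some $\epsilon_1>0$) and $m_1:\mathcal W\to[0,1]$ be measurable functions such that either $g_1=g$ or $m_1=m$ ($P$-almost surely). Define \[ r_1(w)=E_P\big\{Y-m_1(W)\mid A=1,\ g_1(W)=g_1(w)\big\},\qquad e_1(w)=E_P\big\{g_1(W)\mid r_1(W)=r_1(w)\big\}\] (the $e$-score), and let $\lambda_1=(e_1,m_1)$. Then $P D_{\lambda_1,\theta}=E_P\{D_{\lambda_1,\theta}(O)\}=0$.
   Context: Let $O=(W,A,Y)$ be a random vector with distribution $P$, where $W$ takes values in a measurable space $\mathcal W$, $A\in\{0,1\}$, and $Y\in[0,1]$. Let $g(w)=P(A=1\mid W=w)$ (propensity score), $m(w)=E_P(Y\mid A=1,W=w)$ (outcome regression), and $\theta=E_P\{m(W)\}$. Strong positivity is assumed: there is $\epsilon>0$ with $P\{g(W)>\epsilon\}=1$. For a measurable $e:\mathcal W\to(0,1]$ bounded away from $0$ and a measurable $m':\mathcal W\to\mathbb R$, write $\lambda=(e,m')$ and \[ D_{\lambda,\theta}(O)=\frac{A}{e(W)}\{Y-m'(W)\}+m'(W)-\theta .\] For a function $f$ of $O$, $Pf=\int f\,dP$. *)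

From HB Require Import structures.
From mathcomp Require Import all_boot all_order all_algebra.
From mathcomp Require Import all_classical all_reals all_analysis.
Set Implicit Arguments. Unset Strict Implicit. Unset Printing Implicit Defensive.
Import Order.TTheory GRing.Theory Num.Theory.
Local Open Scope classical_set_scope.
Local Open Scope ring_scope.

(* [cond_exp_version P E X Z h]: h is a version of the conditional expectation
   v |-> E_P[ X | E, Z = v ], i.e. h is measurable, h o Z is integrable, and
   for every measurable set B of values of Z,
      E_P[ X 1_E 1_{Z in B} ] = E_P[ h(Z) 1_E 1_{Z in B} ].
   With E = setT this is the usual E_P[X | Z = v]. *)
Definition cond_exp_version {d} {T : measurableType d} {R : realType}
  (P : probability T R) {dV} {V : measurableType dV}
  (E : set T) (X : T -> R) (Z : T -> V) (h : V -> R) : Prop :=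
  measurable_fun setT h /\
  P.-integrable setT (fun x => (h (Z x))%:E) /\
  forall B : set V, measurable B ->
    (\int[P]_(x in E `&` Z @^-1` B) (X x)%:E =
     \int[P]_(x in E `&` Z @^-1` B) (h (Z x))%:E)%E.

Definition D_lambda {dW} {Wsp : measurableType dW} {R : realType}
  (e m' : Wsp -> R) (theta : R) (o : Wsp * R * R) : R :=
  let '(w, a, y) := o in a / e w * (y - m' w) + m' w - theta.

(* Up to the constant E[m(W)] - theta = 0, P D is the difference between the
   weighted residual E[A (Y - m1(W)) / e1(W)] and the outcome bias E[m(W) - m1(W)].
   If m1 = m, both vanish, since m is the regression of Y on W among the treated.
   If g1 = g, both equal E[r1(W)]: conditioning on g1(W) (definition of r1), on W
   (propensity g = g1) and on r1(W) (definition of e1) turns the weighted residual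
   into E[g1 r1 / e1] = E[e1 r1 / e1], and the bias into
   E[A (m - m1) / g1] = E[A (Y - m1) / g1] = E[A r1 / g1] = E[r1].
   Each step tests a conditional expectation against a bounded function; the set-wise
   definition extends to those by simple-function approximation and dominated
   convergence. The test functions are only almost surely bounded, because the bounds
   |r1| <= 1 and e1 >= eps1 hold almost surely; they hold on the whole space rather
   than only among the treated thanks to strong positivity. *)

From HB Require Import structures.
From mathcomp Require Import all_boot all_order all_algebra.
From mathcomp Require Import all_classical all_reals all_analysis.
From mathcomp Require Import measurable_realfun lra ring.
Import Order.TTheory GRing.Theory Num.Theory.
Import HBNNSimple.
Local Open Scope classical_set_scope.
Local Open Scope ring_scope.

Lemma measurable_inv (R : realType) : measurable_fun [set: R] GRing.inv.
Proof.
have -> : [set: R] = [set 0] `|` ~` [set 0] by rewrite setUCr.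
apply/measurable_funU; [exact: measurable_set1 | exact: measurableC | split].
- by apply: measurable_fun_set1.
- apply: open_continuous_measurable_fun.
    exact/closed_openC/accessible_closed_set1/hausdorff_accessible.
  by move=> x; rewrite inE /= => /eqP x0; exact: inv_continuous.
Qed.

Lemma measurable_preimageT {d d'} {T : measurableType d} {V : measurableType d'}
  {Z : T -> V} {S : set V} :
  measurable_fun setT Z -> measurable S -> measurable (Z @^-1` S).
Proof. by move=> mZ mS; rewrite -[_ @^-1` _]setTI; exact: mZ. Qed.

Section cond_exp_version_theory.
Context {R : realType} {d : measure_display} {T : measurableType d}
  (P : probability T R).
Local Open Scope ereal_scope.

Lemma integrable_ae_bounded {D : set T} {f : T -> R} {C : R} :
  measurable D -> measurable_fun D f -> {ae P, forall x, D x -> `|f x| <= C}%R ->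
  P.-integrable D (EFin \o f).
Proof.
move=> mD mf fC; apply/integrableP; split; first exact/measurable_EFinP.
apply: (@le_lt_trans _ _ (`|C|%:E * P D)).
  apply: integral_le_bound => //; first exact/measurable_EFinP.
  apply: filterS fC => x fCx Dx; rewrite lee_fin (le_trans (fCx Dx))//.
  exact: ler_norm.
by rewrite lte_mul_pinfty// (le_lt_trans (probability_le1 P mD)) ?ltry.
Qed.

Lemma integral_mul_indic_preimage {dV} {V : measurableType dV} (E : set T)
  (Z : T -> V) (G : T -> R) (S : set V) :
  \int[P]_(x in E) (G x * \1_S (Z x))%:E =
  \int[P]_(x in E `&` Z @^-1` S) (G x)%:E.
Proof.
rewrite integral_mkcondr; apply: eq_integral => x _.
rewrite patchE indicE (_ : (Z x \in S) = (x \in Z @^-1` S))//.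
by case: ifPn => _; rewrite ?mulr1 ?mulr0.
Qed.

Lemma integrable_mul_bounded {D : set T} {G k : T -> R} {C : R} :
  measurable D -> P.-integrable D (EFin \o G) ->
  measurable_fun D k -> (forall x, D x -> `|k x| <= C)%R ->
  P.-integrable D (fun x => (G x * k x)%:E).
Proof.
move=> mD iG mk kC.
have kb : [bounded k x | x in D].
  exists C; split; first exact: num_real.
  by move=> M CM x Dx; exact: le_trans (kC x Dx) (ltW CM).
by have := integrableMl mD iG mk kb; apply: eq_integrable.
Qed.

Lemma ae_eq_integral_EFin {D : set T} {F G : T -> R} :
  measurable D -> measurable_fun D F -> measurable_fun D G ->
  {ae P, forall x, F x = G x} ->
  \int[P]_(x in D) (F x)%:E = \int[P]_(x in D) (G x)%:E.
Proof.
move=> mD mF mG FG; apply: ae_eq_integral => //; try exact/measurable_EFinP.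
by apply: filterS FG => x -> _.
Qed.

Section test_functions.
Context {dV : measure_display} {V : measurableType dV}
  {E : set T} {X : T -> R} {Z : T -> V} {h : V -> R}.
Hypotheses (mE : measurable E) (mZ : measurable_fun setT Z)
  (iX : P.-integrable E (EFin \o X)) (hX : cond_exp_version P E X Z h).

Let ihZ : P.-integrable E (EFin \o (h \o Z)).
Proof. by case: hX => _ [ih _]; exact: integrableS ih. Qed.

Lemma integral_mul_nnsfun {G : T -> R} (s : {nnsfun V >-> R}) :
  P.-integrable E (EFin \o G) ->
  let L := finmap.enum_fset (fset_set (range s)) in
  \int[P]_(x in E) (G x * s (Z x))%:E =
  \sum_(i < size L) (L`_i)%:E * \int[P]_(x in E `&` Z @^-1` (s @^-1` [set L`_i])) (G x)%:E.
Proof.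
move=> iG L.
have mindic i : measurable_fun E (fun x => \1_(s @^-1` [set L`_i]) (Z x) : R).
  exact/measurable_funTS/measurableT_comp.
under eq_integral do rewrite (fimfunEord s (Z _)) mulr_sumr -sumEFin.
rewrite integral_sum//; last first.
  move=> i; apply: (integrable_mul_bounded (C := `|L`_i|) mE iG) => //.
    exact: measurable_funM.
  move=> x _; rewrite normrM indicE.
  by case: (_ \in _); rewrite ?normr1 ?normr0 ?mulr1 ?mulr0.
apply: eq_bigr => i _.
under eq_integral do rewrite mulrCA EFinM.
rewrite integralZl ?integral_mul_indic_preimage//.
apply: (integrable_mul_bounded (C := 1) mE iG) => // x _.
by rewrite indicE; case: (_ \in _); rewrite ?normr1 ?normr0.
Qed.

Lemma cond_exp_version_nnsfun (s : {nnsfun V >-> R}) :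
  \int[P]_(x in E) (X x * s (Z x))%:E = \int[P]_(x in E) (h (Z x) * s (Z x))%:E.
Proof.
rewrite (integral_mul_nnsfun s iX) (integral_mul_nnsfun s ihZ).
apply: eq_bigr => i _; congr (_ * _).
by case: hX => _ [_ ->]//; exact: measurable_funPTI.
Qed.

Lemma cond_exp_version_bounded_ge0 {f : V -> R} {C : R} :
  measurable_fun setT f -> (forall v, 0 <= f v <= C)%R ->
  \int[P]_(x in E) (X x * f (Z x))%:E = \int[P]_(x in E) (h (Z x) * f (Z x))%:E.
Proof.
move=> mf fC.
have mEf : measurable_fun setT (EFin \o f) by exact/measurable_EFinP.
have f0 : forall v, setT v -> 0 <= (EFin \o f) v.
  by move=> v _; rewrite lee_fin; case/andP: (fC v).
pose s := nnsfun_approx measurableT mEf.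
have s_le_f n v : (s n v <= f v)%R.
  by rewrite -lee_fin /s nnsfun_approxE; exact: le_approx.
have cvg_int G : P.-integrable E (EFin \o G) ->
    (fun n => \int[P]_(x in E) (G x * s n (Z x))%:E) @ \oo -->
    \int[P]_(x in E) (G x * f (Z x))%:E.
  move=> iG.
  have mG : measurable_fun E G by exact/measurable_EFinP/(measurable_int P iG).
  apply: (@dominated_cvg _ _ _ P E mE _ _ (fun x => (`|G x| * C)%:E)).
  - move=> n; apply/measurable_EFinP/measurable_funM => //.
    exact/measurable_funTS/measurableT_comp.
  - move=> x Ex; under eq_fun do rewrite EFinM.
    rewrite EFinM; apply: cvgeZl => //.
    exact: (cvg_nnsfun_approx measurableT mEf f0).
  - by [].
  - apply: (integrable_mul_bounded (k := cst C) (C := `|C|) mE) => //.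
    exact/integrable_norm.
  - move=> n x Ex; rewrite abse_EFin lee_fin normrM ler_wpM2l//.
    rewrite ger0_norm//; apply: le_trans (s_le_f n (Z x)) _.
    by case/andP: (fC (Z x)).
have := cvg_int X iX.
under eq_fun do rewrite cond_exp_version_nnsfun.
by move=> /cvg_unique; apply => //; exact: cvg_int ihZ.
Qed.

Lemma cond_exp_version_bounded {f : V -> R} {C : R} :
  measurable_fun setT f -> (forall v, `|f v| <= C)%R ->
  \int[P]_(x in E) (X x * f (Z x))%:E = \int[P]_(x in E) (h (Z x) * f (Z x))%:E.
Proof.
move=> mf fC.
have fCn v : (`|f v| <= `|C|)%R by exact: le_trans (fC v) (ler_norm C).
have shift_ge0 v : (0 <= f v + `|C| <= `|C| + `|C|)%R.
  by move: (fCn v); rewrite ler_norml => /andP[? ?]; apply/andP; split; lra.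
have cst_ge0 (v : V) : (0 <= `|C| <= `|C|)%R by rewrite normr_ge0 lexx.
have mfE : measurable_fun E (f \o Z) by exact/measurable_funTS/measurableT_comp.
have splitD G : P.-integrable E (EFin \o G) ->
    \int[P]_(x in E) (G x * (f (Z x) + `|C|))%:E =
    \int[P]_(x in E) (G x * f (Z x))%:E + \int[P]_(x in E) (G x * `|C|)%:E.
  move=> iG; under eq_integral do rewrite mulrDr EFinD.
  rewrite integralD//.
  - exact: (integrable_mul_bounded mE).
  - by apply: (integrable_mul_bounded (C := `|C|%R) mE) => //; rewrite normr_id.
have := cond_exp_version_bounded_ge0 (measurable_funD mf (measurable_cst _)) shift_ge0.
rewrite (splitD _ iX) (splitD _ ihZ).
rewrite (cond_exp_version_bounded_ge0 (measurable_cst _) cst_ge0).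
have fin : \int[P]_(x in E) (h (Z x) * `|C|)%:E \is a fin_num.
  apply: integrable_fin_num => //.
  apply: (integrable_mul_bounded (C := `|C|%R) mE ihZ) => //.
  by rewrite normr_id.
by move/(congr1 (fun e => e - \int[P]_(x in E) (h (Z x) * `|C|)%:E)); rewrite !addeK.
Qed.

Lemma cond_exp_version_ae_bounded {f : V -> R} {C : R} :
  measurable_fun setT f -> {ae P, forall x, `|f (Z x)| <= C}%R ->
  \int[P]_(x in E) (X x * f (Z x))%:E = \int[P]_(x in E) (h (Z x) * f (Z x))%:E.
Proof.
move=> mf fC.
pose c (v : V) := Num.max (- C)%R (Num.min (f v) C).
have mc : measurable_fun setT c.
  by apply: measurable_maxr; [exact: measurable_cst | apply: measurable_minr].
have cC v : (`|c v| <= `|C|)%R.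
  have CC : (C <= `|C|)%R by exact: ler_norm.
  have NCC : (- C <= `|C|)%R by rewrite -normrN ler_norm.
  by rewrite ler_norml /c ge_max le_max lerNl opprK ge_min CC NCC orbT.
have cf : {ae P, forall x, c (Z x) = f (Z x)}.
  apply: filterS fC => x; rewrite ler_norml => /andP[? ?].
  by rewrite /c (min_idPl _) ?(max_idPr _).
have clip (G : T -> R) : measurable_fun E G ->
    \int[P]_(x in E) (G x * f (Z x))%:E = \int[P]_(x in E) (G x * c (Z x))%:E.
  move=> mG; apply: ae_eq_integral_EFin => //.
  - exact/measurable_funM/measurable_funTS/measurableT_comp.
  - exact/measurable_funM/measurable_funTS/measurableT_comp.
  - by apply: filterS cf => x ->.
have mX : measurable_fun E X by exact/measurable_EFinP/(measurable_int P iX).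
have mhZ : measurable_fun E (h \o Z) by exact/measurable_EFinP/(measurable_int P ihZ).
by rewrite (clip _ mX) (clip _ mhZ); exact: (cond_exp_version_bounded mc cC).
Qed.

End test_functions.

Lemma integral_gt0_eq0_null {D : set T} {F : T -> R} :
  measurable D -> measurable_fun D F -> {ae P, forall x, D x -> 0 < F x}%R ->
  \int[P]_(x in D) (F x)%:E = 0 -> P D = 0.
Proof.
move=> mD mF F_gt0 intF0.
have mEF : measurable_fun D (EFin \o F) by exact/measurable_EFinP.
have intF_abs : \int[P]_(x in D) `|(EFin \o F) x| = \int[P]_(x in D) (F x)%:E.
  apply: ae_eq_integral => //; first exact: measurableT_comp.
  by apply: filterS F_gt0 => x Fx Dx /=; rewrite gtr0_norm// Fx.
have /(ae_eq_integral_abs P mD mEF).1 F0 : \int[P]_(x in D) `|(EFin \o F) x| = 0.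
  by rewrite intF_abs.
have [N [mN PN DN]] : {ae P, forall x, ~ D x}.
  apply: filterS2 F_gt0 F0 => x Fx F0x Dx.
  by have := Fx Dx; move: (F0x Dx) => /= [->]; rewrite ltxx.
apply/eqP; rewrite eq_le measure_ge0 andbT -PN le_measure ?inE//.
by move=> x Dx; apply: DN => /=; apply.
Qed.

(* The last hypothesis says that the law of Z on E dominates the law of Z;
   without it, h o Z is only controlled on E. *)
Lemma cond_exp_version_ae_le {dV} {V : measurableType dV} {E : set T} {X : T -> R}
  {Z : T -> V} {h : V -> R} {b : R} :
  measurable E -> measurable_fun setT Z -> P.-integrable E (EFin \o X) ->
  cond_exp_version P E X Z h -> (forall x, E x -> X x <= b)%R ->
  (forall S, measurable S -> P (E `&` Z @^-1` S) = 0 -> P (Z @^-1` S) = 0) ->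
  {ae P, forall x, h (Z x) <= b}%R.
Proof.
move=> mE mZ iX [mh [ih hX]] Xb E_charges.
pose S := h @^-1` `]b, +oo[%classic.
have mS : measurable S by exact: measurable_preimageT.
have mD : measurable (E `&` Z @^-1` S).
  by apply: measurableI => //; exact: measurable_preimageT.
have iXD : P.-integrable (E `&` Z @^-1` S) (EFin \o X).
  exact: integrableS iX.
have ihD : P.-integrable (E `&` Z @^-1` S) (fun x => (h (Z x))%:E).
  exact: integrableS ih.
have PD0 : P (E `&` Z @^-1` S) = 0.
  apply: (@integral_gt0_eq0_null _ (fun x => h (Z x) - X x)%R mD).
  - apply: measurable_funB; last exact/measurable_EFinP/(measurable_int P iXD).
    exact/measurable_funTS/measurableT_comp.
  - apply: nearW => x [Ex /=]; rewrite /S /= in_itv /= andbT => bh.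
    by rewrite subr_gt0 (le_lt_trans (Xb x Ex)).
  - rewrite integralB_EFin// (hX S mS) subee// integrable_fin_num//.
exists (Z @^-1` S); split; [exact: measurable_preimageT | exact: E_charges |].
by move=> x /= /negP; rewrite -ltNge /S /= in_itv /= andbT.
Qed.

Lemma cond_exp_versionN {dV} {V : measurableType dV} {E : set T} {X : T -> R}
  {Z : T -> V} {h : V -> R} :
  measurable E -> measurable_fun setT Z -> P.-integrable E (EFin \o X) ->
  cond_exp_version P E X Z h ->
  cond_exp_version P E (fun x => - X x)%R Z (fun v => - h v)%R.
Proof.
move=> mE mZ iX [mh [ih hX]]; split; first exact: measurable_funN.
split; first by apply: eq_integrable (integrableN ih) => // x _.
move=> B mB; have mEB : measurable (E `&` Z @^-1` B).
  by apply: measurableI => //; exact: measurable_preimageT.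
rewrite (eq_integral (fun x => - (X x)%:E))// integralN; last first.
  by apply/integrable_add_def/(integrableS mE mEB _ iX).
rewrite [RHS](eq_integral (fun x => - (h (Z x))%:E))// integralN ?hX//.
exact/integrable_add_def/(integrableS measurableT mEB _ ih).
Qed.

Lemma cond_exp_version_ae_ge {dV} {V : measurableType dV} {E : set T} {X : T -> R}
  {Z : T -> V} {h : V -> R} {a : R} :
  measurable E -> measurable_fun setT Z -> P.-integrable E (EFin \o X) ->
  cond_exp_version P E X Z h -> (forall x, E x -> a <= X x)%R ->
  (forall S, measurable S -> P (E `&` Z @^-1` S) = 0 -> P (Z @^-1` S) = 0) ->
  {ae P, forall x, a <= h (Z x)}%R.
Proof.
move=> mE mZ iX hX aX E_charges.
have iNX : P.-integrable E (EFin \o (fun x => - X x)%R).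
  by apply: eq_integrable (integrableN iX) => // x _.
have NXa x : E x -> (- X x <= - a)%R by move=> Ex; rewrite lerN2; exact: aX.
have := cond_exp_version_ae_le mE mZ iNX (cond_exp_versionN mE mZ iX hX) NXa E_charges.
by apply: filterS => x; rewrite lerN2.
Qed.

Lemma cond_exp_version_sub_comp {dV} {V : measurableType dV} {E : set T}
  {X : T -> R} {Z : T -> V} {h c : V -> R} {C : R} :
  measurable E -> measurable_fun setT Z -> P.-integrable E (EFin \o X) ->
  measurable_fun setT c -> (forall v, `|c v| <= C)%R ->
  cond_exp_version P E X Z h ->
  cond_exp_version P E (fun x => X x - c (Z x))%R Z (fun v => h v - c v)%R.
Proof.
move=> mE mZ iX mc cC [mh [ih hX]].
have icZ D : measurable D -> P.-integrable D (EFin \o (c \o Z)).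
  move=> mD; apply: (integrable_ae_bounded mD).
    exact/measurable_funTS/measurableT_comp.
  by apply: aeW => x _; exact: cC.
split; first exact: measurable_funB.
split; first by apply: eq_integrable (integrableB _ ih (icZ _ measurableT)) => // x _.
move=> B mB; have mEB : measurable (E `&` Z @^-1` B).
  by apply: measurableI => //; exact: measurable_preimageT.
rewrite !integralB_EFin ?hX ?icZ//; [exact: integrableS ih | exact: integrableS iX].
Qed.

End cond_exp_version_theory.

Section doubly_robust.
Context {R : realType} {d : measure_display} {T : measurableType d}
  {P : probability T R} {dW : measure_display} {Wsp : measurableType dW}
  {W : T -> Wsp} {A Y : T -> R}.
Hypotheses (mW : measurable_fun setT W) (mA : measurable_fun setT A)
  (mY : measurable_fun setT Y)
  (A01 : forall x, A x = 0 \/ A x = 1) (Y01 : forall x, 0 <= Y x <= 1).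
Context {g m : Wsp -> R}.
Hypotheses (hg : cond_exp_version P setT A W g)
  (hm : cond_exp_version P [set x | A x = 1] Y W m).
Context {eps : R}.
Hypotheses (eps_gt0 : 0 < eps) (positivity : {ae P, forall x, eps < g (W x)}).
Context {g1 m1 : Wsp -> R} {eps1 : R}.
Hypotheses (eps1_gt0 : 0 < eps1)
  (mg1 : measurable_fun setT g1) (mm1 : measurable_fun setT m1)
  (g1_range : forall w, eps1 <= g1 w <= 1) (m1_range : forall w, 0 <= m1 w <= 1).
Context {rho eta : R -> R}.
Hypotheses (hrho : cond_exp_version P [set x | A x = 1]
              (fun x => Y x - m1 (W x)) (fun x => g1 (W x)) rho)
  (heta : cond_exp_version P setT
              (fun x => g1 (W x)) (fun x => rho (g1 (W x))) eta).

Local Notation treated := [set x | A x = 1].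
Local Notation G1 x := (g1 (W x)).
Local Notation R1 x := (rho (g1 (W x))).
Local Notation E1 x := (eta (rho (g1 (W x)))).

Let mtreated : measurable treated.
Proof. by have := mA measurableT _ (measurable_set1 (1 : R)); rewrite setTI. Qed.

Let mg : measurable_fun setT g. Proof. by case: hg. Qed.
Let mm : measurable_fun setT m. Proof. by case: hm. Qed.
Let mrho : measurable_fun setT rho. Proof. by case: hrho. Qed.
Let meta : measurable_fun setT eta. Proof. by case: heta. Qed.
Let minv : measurable_fun setT (@GRing.inv R) := measurable_inv R.
Let mr1 : measurable_fun setT (fun w => rho (g1 w)) := measurableT_comp mrho mg1.
Let me1 : measurable_fun setT (fun w => eta (rho (g1 w))) := measurableT_comp meta mr1.
Let mG1 : measurable_fun setT (fun x => G1 x) := measurableT_comp mg1 mW.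
Let mR1 : measurable_fun setT (fun x => R1 x) := measurableT_comp mr1 mW.
Let mE1 : measurable_fun setT (fun x => E1 x) := measurableT_comp me1 mW.

Let g1_gt0 w : 0 < g1 w.
Proof. by case/andP: (g1_range w) => /(lt_le_trans eps1_gt0). Qed.

Let inv_le_eps1 (t : R) : eps1 <= t -> `|t^-1| <= eps1^-1.
Proof.
move=> et; have t_gt0 : 0 < t by exact: lt_le_trans et.
by rewrite ger0_norm ?invr_ge0 ?(ltW t_gt0)// lef_pV2 ?posrE.
Qed.

Let residual_bound x : `|Y x - m1 (W x)| <= 1.
Proof.
by case/andP: (Y01 x) => ? ?; case/andP: (m1_range (W x)) => ? ?; rewrite ler_norml; lra.
Qed.

Let A_indic x : A x = \1_treated x.
Proof.
rewrite indicE; case: (A01 x) => Ax; last by rewrite Ax mem_set.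
by rewrite Ax memNset//= Ax => /eqP; rewrite eq_sym oner_eq0.
Qed.

Lemma integral_mul_A (G : T -> R) :
  (\int[P]_x (A x * G x)%:E = \int[P]_(x in treated) (G x)%:E)%E.
Proof.
transitivity (\int[P]_x (G x * \1_treated (id x))%:E)%E.
  by apply: eq_integral => x _; rewrite A_indic mulrC.
by rewrite integral_mul_indic_preimage setTI.
Qed.

Lemma W_event_null_of_treated_null (S : set Wsp) : measurable S ->
  P (treated `&` W @^-1` S) = 0%E -> P (W @^-1` S) = 0%E.
Proof.
move=> mS PS0; have mWS := measurable_preimageT mW mS.
case: hg => _ [_ /(_ S mS)]; rewrite setTI.
under eq_integral do rewrite A_indic.
rewrite integral_indic ?PS0// => /esym int_g0.
apply: (integral_gt0_eq0_null P (F := fun x => g (W x))) => //.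
- exact/measurable_funTS/measurableT_comp.
- by apply: filterS positivity => x gx _; exact: lt_trans gx.
by rewrite int_g0; exact: PS0.
Qed.

Let bounded_integrable {D : set T} {f : T -> R} {C : R} :
  measurable D -> measurable_fun setT f -> (forall x, `|f x| <= C) ->
  P.-integrable D (EFin \o f).
Proof.
move=> mD mf fC; apply: integrable_ae_bounded => //; first exact: measurable_funTS.
by apply: aeW => x _; exact: fC.
Qed.

Let iY : P.-integrable treated (EFin \o Y).
Proof.
apply: (bounded_integrable (C := 1)) => // x.
by rewrite ger0_norm; case/andP: (Y01 x).
Qed.

Let iYm1 : P.-integrable treated (EFin \o (fun x => Y x - m1 (W x))).
Proof.
apply: (bounded_integrable (C := 1)) => //.
exact/measurable_funB/measurableT_comp.
Qed.

Let iG1 : P.-integrable setT (EFin \o (fun x => G1 x)).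
Proof.
apply: (bounded_integrable (C := 1)) => // x.
by rewrite ger0_norm ?(ltW (g1_gt0 _))//; case/andP: (g1_range (W x)).
Qed.

Let G1_event_null_of_treated_null (S : set R) : measurable S ->
  P (treated `&` (fun x => G1 x) @^-1` S) = 0%E -> P ((fun x => G1 x) @^-1` S) = 0%E.
Proof.
move=> mS; apply: (W_event_null_of_treated_null (g1 @^-1` S)).
exact: measurable_preimageT.
Qed.

Let m_ae_bounded : {ae P, forall x, 0 <= m (W x) <= 1}.
Proof.
have Y_ge0 x : treated x -> 0 <= Y x by case/andP: (Y01 x).
have Y_le1 x : treated x -> Y x <= 1 by case/andP: (Y01 x).
have := cond_exp_version_ae_ge P mtreated mW iY hm Y_ge0 W_event_null_of_treated_null.
have := cond_exp_version_ae_le P mtreated mW iY hm Y_le1 W_event_null_of_treated_null.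
by apply: filterS2 => x -> ->.
Qed.

Let rho_ae_bounded : {ae P, forall x, `|R1 x| <= 1}.
Proof.
have [res_ge res_le] : (forall x, treated x -> -1 <= Y x - m1 (W x)) /\
    (forall x, treated x -> Y x - m1 (W x) <= 1).
  by split=> x _; move: (residual_bound x); rewrite ler_norml => /andP[].
have := cond_exp_version_ae_ge P mtreated mG1 iYm1 hrho res_ge
  G1_event_null_of_treated_null.
have := cond_exp_version_ae_le P mtreated mG1 iYm1 hrho res_le
  G1_event_null_of_treated_null.
by apply: filterS2 => x ? ?; rewrite ler_norml; apply/andP.
Qed.

Let eta_ae_ge : {ae P, forall x, eps1 <= E1 x}.
Proof.
apply: (cond_exp_version_ae_ge P measurableT mR1 iG1 heta).
  by move=> x _; case/andP: (g1_range (W x)).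
by move=> S mS; rewrite setTI.
Qed.

Let iA : P.-integrable setT (EFin \o A).
Proof.
apply: (bounded_integrable (C := 1)) => // x.
by case: (A01 x) => ->; rewrite ?normr0 ?normr1.
Qed.

Let inv_E1 : {ae P, forall x, `|(E1 x)^-1| <= eps1^-1}.
Proof. by apply: filterS eta_ae_ge => x; exact: inv_le_eps1. Qed.

Let hbias : cond_exp_version P treated (fun x => Y x - m1 (W x)) W (fun w => m w - m1 w).
Proof.
apply: (cond_exp_version_sub_comp P (C := 1)) => // w.
by rewrite ger0_norm; case/andP: (m1_range w).
Qed.

Lemma integral_D_lambda_eq0 :
  (\int[P]_x (A x / E1 x * (Y x - m1 (W x)))%:E = \int[P]_x (m (W x) - m1 (W x))%:E)%E ->
  (\int[P]_x (D_lambda (fun w => eta (rho (g1 w))) m1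
     (fine (\int[P]_x (m (W x))%:E)) (W x, A x, Y x))%:E = 0)%E.
Proof.
move=> balance; set theta := fine _.
have imW : P.-integrable setT (EFin \o (fun x => m (W x))) by case: hm => _ [].
have im1W : P.-integrable setT (EFin \o (fun x => m1 (W x))).
  apply: (bounded_integrable (C := 1)) => [||x]; first exact: measurableT.
    exact: measurableT_comp mm1 mW.
  by rewrite ger0_norm; case/andP: (m1_range (W x)).
have iJ : P.-integrable setT (EFin \o (fun x => A x / E1 x * (Y x - m1 (W x)))).
  apply: (integrable_ae_bounded P (C := eps1^-1)) => //.
    apply/measurable_funM/measurable_funB/(measurableT_comp mm1 mW) => //.
    exact: measurable_funM mA (measurableT_comp minv mE1).
  apply: filterS inv_E1 => x E1_le _.
  rewrite normrM normrM -[leRHS]mulr1 -[eps1^-1]mul1r ler_pM ?mulr_ge0//.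
  by rewrite ler_pM//; case: (A01 x) => ->; rewrite ?normr0 ?normr1.
transitivity (\int[P]_x ((A x / E1 x * (Y x - m1 (W x)) + m1 (W x))%:E - theta%:E))%E.
  by apply: eq_integral => x _; rewrite EFinB.
rewrite integralB_EFin//; first last.
- exact: finite_measure_integrable_cst.
- by apply: eq_integrable (integrableD measurableT iJ im1W) => // x _; rewrite /= EFinD.
under eq_integral do rewrite EFinD.
have split_bias : (\int[P]_x (m (W x) - m1 (W x))%:E =
    \int[P]_x (m (W x))%:E - \int[P]_x (m1 (W x))%:E)%E.
  by rewrite -integralB_EFin//; apply: eq_integral => x _; rewrite EFinB.
have PT : (theta%:E * P setT = theta%:E)%E by rewrite probability_setT mule1.
have fin_m : (\int[P]_x (m (W x))%:E)%E \is a fin_num by exact: integrable_fin_num.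
have fin_m1 : (\int[P]_x (m1 (W x))%:E)%E \is a fin_num by exact: integrable_fin_num.
by rewrite integralD// balance integral_cst// PT split_bias subeK// /theta fineK// subee.
Qed.

Section correct_propensity.
Hypothesis g1_eq_g : {ae P, forall x, g1 (W x) = g (W x)}.

Lemma integral_treated_propensity (f : Wsp -> R) (C : R) :
  measurable_fun setT f -> {ae P, forall x, `|f (W x)| <= C} ->
  (\int[P]_(x in treated) (f (W x))%:E = \int[P]_x (G1 x * f (W x))%:E)%E.
Proof.
move=> mf fC; rewrite -integral_mul_A.
rewrite (cond_exp_version_ae_bounded P measurableT mW iA hg mf fC).
have mfW : measurable_fun setT (f \o W) := measurableT_comp mf mW.
apply: ae_eq_integral_EFin => //.
- exact: measurable_funM (measurableT_comp mg mW) mfW.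
- exact: measurable_funM mG1 mfW.
- by apply: filterS g1_eq_g => x ->.
Qed.

Lemma weighted_residual_propensity :
  (\int[P]_x (A x / E1 x * (Y x - m1 (W x)))%:E = \int[P]_x (R1 x)%:E)%E.
Proof.
have R1_inv_E1 : {ae P, forall x, `|R1 x * (E1 x)^-1| <= eps1^-1}.
  apply: filterS2 rho_ae_bounded inv_E1 => x R1_le E1_le.
  by rewrite normrM -[leRHS]mul1r ler_pM.
transitivity (\int[P]_(x in treated) ((Y x - m1 (W x)) * (eta (rho (G1 x)))^-1)%:E)%E.
  by rewrite -integral_mul_A; apply: eq_integral => x _; congr (_%:E); ring.
rewrite (cond_exp_version_ae_bounded P mtreated mG1 iYm1 hrho
  (f := fun t => (eta (rho t))^-1) _ inv_E1); last first.
  exact/(measurableT_comp minv)/(measurableT_comp meta).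
rewrite (integral_treated_propensity (fun w => rho (g1 w) * (eta (rho (g1 w)))^-1)
  _ _ R1_inv_E1); last first.
  exact: measurable_funM mr1 (measurableT_comp minv me1).
rewrite (cond_exp_version_ae_bounded P measurableT mR1 iG1 heta
  (f := fun t => t * (eta t)^-1) _ R1_inv_E1); last first.
  by apply: measurable_funM; [exact: measurable_id | exact: measurableT_comp minv meta].
apply: ae_eq_integral_EFin => //.
  exact: measurable_funM mE1 (measurable_funM mR1 (measurableT_comp minv mE1)).
apply: filterS eta_ae_ge => x E1_ge; rewrite mulrCA divff ?mulr1//.
by rewrite gt_eqF// (lt_le_trans eps1_gt0).
Qed.

Lemma outcome_bias_propensity :
  (\int[P]_x (m (W x) - m1 (W x))%:E = \int[P]_x (R1 x)%:E)%E.
Proof.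
have minvg1 : measurable_fun setT (fun w => (g1 w)^-1) := measurableT_comp minv mg1.
have inv_g1 w : `|(g1 w)^-1| <= eps1^-1 by apply: inv_le_eps1; case/andP: (g1_range w).
have bias_inv_g1 : {ae P, forall x, `|(m (W x) - m1 (W x)) * (G1 x)^-1| <= eps1^-1}.
  apply: filterS m_ae_bounded => x /andP[? ?].
  rewrite normrM -[leRHS]mul1r ler_pM// ler_norml.
  by case/andP: (m1_range (W x)) => ? ?; apply/andP; split; lra.
have R1_inv_g1 : {ae P, forall x, `|R1 x * (G1 x)^-1| <= eps1^-1}.
  by apply: filterS rho_ae_bounded => x ?; rewrite normrM -[leRHS]mul1r ler_pM.
transitivity (\int[P]_x (G1 x * ((m (W x) - m1 (W x)) * (G1 x)^-1))%:E)%E.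
  by apply: eq_integral => x _; rewrite mulrCA divff ?mulr1// gt_eqF.
rewrite -(integral_treated_propensity (fun w => (m w - m1 w) * (g1 w)^-1)
  _ _ bias_inv_g1); last first.
  exact: measurable_funM (measurable_funB mm mm1) minvg1.
rewrite -(cond_exp_version_ae_bounded P mtreated mW iYm1 hbias
  (f := fun w => (g1 w)^-1) minvg1 (aeW _ (fun x => inv_g1 (W x)))).
rewrite (cond_exp_version_ae_bounded P mtreated mG1 iYm1 hrho
  (f := fun t => t^-1) minv (aeW _ (fun x => inv_g1 (W x)))).
rewrite (integral_treated_propensity (fun w => rho (g1 w) * (g1 w)^-1)
  _ _ R1_inv_g1); last first.
  exact: measurable_funM mr1 minvg1.
by apply: eq_integral => x _; rewrite mulrCA divff ?mulr1// gt_eqF.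
Qed.

End correct_propensity.

Section correct_outcome.
Hypothesis m1_eq_m : {ae P, forall x, m1 (W x) = m (W x)}.

Lemma weighted_residual_outcome :
  (\int[P]_x (A x / E1 x * (Y x - m1 (W x)))%:E = 0)%E.
Proof.
transitivity (\int[P]_(x in treated) ((Y x - m1 (W x)) * (eta (rho (g1 (W x))))^-1)%:E)%E.
  by rewrite -integral_mul_A; apply: eq_integral => x _; congr (_%:E); ring.
rewrite (cond_exp_version_ae_bounded P mtreated mW iYm1 hbias
  (f := fun w => (eta (rho (g1 w)))^-1) _ inv_E1); last exact: measurableT_comp minv me1.
rewrite -(integral0 P treated).
apply: ae_eq_integral_EFin => //.
- apply/measurable_funTS/measurable_funM; last exact: measurableT_comp minv mE1.
  exact: measurable_funB (measurableT_comp mm mW) (measurableT_comp mm1 mW).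
- by apply: filterS m1_eq_m => x ->; rewrite subrr mul0r.
Qed.

Lemma outcome_bias_outcome : (\int[P]_x (m (W x) - m1 (W x))%:E = 0)%E.
Proof.
rewrite -(integral0 P setT); apply: ae_eq_integral_EFin => //.
- exact: measurable_funB (measurableT_comp mm mW) (measurableT_comp mm1 mW).
- by apply: filterS m1_eq_m => x ->; rewrite subrr.
Qed.

End correct_outcome.

End doubly_robust.

Theorem theorem2 (R : realType) (d : measure_display) (T : measurableType d)
  (P : probability T R) (dW : measure_display) (Wsp : measurableType dW)
  (W : T -> Wsp) (A Y : T -> R)
  (mW : measurable_fun setT W) (mA : measurable_fun setT A)
  (mY : measurable_fun setT Y)
  (A01 : forall x, A x = 0 \/ A x = 1)
  (Y01 : forall x, 0 <= Y x <= 1)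
  (g m : Wsp -> R)
  (hg : cond_exp_version P setT A W g)
  (hm : cond_exp_version P [set x | A x = 1] Y W m)
  (eps : R) (eps_gt0 : 0 < eps)
  (positivity : {ae P, forall x, eps < g (W x)})
  (g1 m1 : Wsp -> R) (eps1 : R) (eps1_gt0 : 0 < eps1)
  (mg1 : measurable_fun setT g1) (mm1 : measurable_fun setT m1)
  (g1_range : forall w, eps1 <= g1 w <= 1)
  (m1_range : forall w, 0 <= m1 w <= 1)
  (double_robust : {ae P, forall x, g1 (W x) = g (W x)} \/
                   {ae P, forall x, m1 (W x) = m (W x)})
  (rho : R -> R)
  (hrho : cond_exp_version P [set x | A x = 1]
            (fun x => Y x - m1 (W x)) (fun x => g1 (W x)) rho)
  (eta : R -> R)
  (heta : cond_exp_version P setT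
            (fun x => g1 (W x)) (fun x => rho (g1 (W x))) eta) :
  let r1 := fun w => rho (g1 w) in
  let e1 := fun w => eta (r1 w) in
  let theta := fine (\int[P]_x (m (W x))%:E)%E in
  (\int[P]_x (D_lambda e1 m1 theta (W x, A x, Y x))%:E = 0)%E.
Proof.
move=> r1 e1 theta.
apply: (integral_D_lambda_eq0 mW mA mY A01 Y01 hm eps1_gt0 mg1 mm1 g1_range m1_range
  hrho heta).
case: double_robust => [g1_eq_g | m1_eq_m].
- rewrite (weighted_residual_propensity mW mA mY A01 Y01 hg eps_gt0 positivity
    eps1_gt0 mg1 mm1 g1_range m1_range hrho heta g1_eq_g).
  by rewrite (outcome_bias_propensity mW mA mY A01 Y01 hg hm eps_gt0 positivity
    eps1_gt0 mg1 mm1 g1_range m1_range hrho g1_eq_g).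
- rewrite (weighted_residual_outcome mW mA mY A01 Y01 hm eps1_gt0 mg1 mm1
    g1_range m1_range hrho heta m1_eq_m).
  by rewrite (outcome_bias_outcome mW hm mm1 m1_eq_m).
Qed.
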